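(* Let $p$ be a prime and $n$ a positive integer with $p\geq n$. Then $$I_{p^n}=\Big(p,\prod_{i=0}^{p-1}(X-i)\Big)^n.$$ That is, the polynomials in $\mathbb{Z}[X]$ whose fixed divisor is divisible by $p^n$ are exactly the elements of the $n$-th power of the ideal generated by $p$ and $X(X-1)\cdots(X-(p-1))$.
   Context: $I_{p^n}=p^n\mathrm{Int}(\mathbb{Z})\cap\mathbb{Z}[X]=\{f\in\mathbb{Z}[X] : p^n\mid f(a)\text{ for all }a\in\mathbb{Z}\}$, where $\mathrm{Int}(\mathbb{Z})=\{f\in\mathbb{Q}[X]: f(\mathbb{Z})\subseteq\mathbb{Z}\}$. *)

From HB Require Import structures.
From mathcomp Require Import all_boot all_order all_algebra.
Set Implicit Arguments. Unset Strict Implicit. Unset Printing Implicit Defensive.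
Import Order.TTheory GRing.Theory Num.Theory.
Local Open Scope ring_scope.

Definition ideal_gen (R : comPzRingType) (S : R -> Prop) (f : R) : Prop :=
  exists s : seq (R * R),
    (forall x, x \in s -> S x.1) /\ f = \sum_(x <- s) x.2 * x.1.

Definition ideal_mul (R : comPzRingType) (I J : R -> Prop) : R -> Prop :=
  ideal_gen (fun c => exists a b, [/\ I a, J b & c = a * b]).

Fixpoint ideal_pow (R : comPzRingType) (I : R -> Prop) (n : nat) : R -> Prop :=
  match n with
  | 0 => fun _ => True
  | n'.+1 => ideal_mul (ideal_pow I n') I
  end.

Definition Ifix (m : nat) (f : {poly int}) : Prop :=
  forall a : int, ((m%:Z) %| f.[a])%Z.

From HB Require Import structures.
From mathcomp Require Import all_boot all_order all_algebra.
Import Order.TTheory GRing.Theory Num.Theory.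
Local Open Scope ring_scope.
From mathcomp Require Import ring.

(* Write ff k = X(X-1)...(X-k+1) for the falling-factorial polynomials; they
   are monic of degree k, so every f in Z[X] is an integer combination
   f = sum_k d_k ff_k (Newton expansion).  Since ff_k(m) = m^_k vanishes for
   m < k and equals k! for m = k, evaluating at m = 0, 1, 2, ... shows by
   induction that p^n | f(Z) forces p^n | k! d_k for every k.

   Inclusion J^n <= I_{p^n}: both generators of J take values divisible by p
   (p consecutive integers contain a multiple of p), and fixed divisors are
   multiplicative along ideal products.

   Inclusion I_{p^n} <= J^n: put j = k %/ p.  If j >= n then ff_(pn) | ff_k
   and ff_(pn) is in J^n.  If j < n then k < p^2, so v_p(k!) = j and
   p^(n-j) | d_k, whence d_k ff_k lies in p^(n-j) ff_(pj) Z[X] <= J^n.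
   That ff_(pm) is in J^m follows since ff_(pm) is a product of m blocks
   of p consecutive linear factors, each of which lies in J by the case n = 1
   of the inclusion itself (applied with m <= 1, where ff_(pm) is 1 or ff_p). *)

Section Ideals.
Variable R : comPzRingType.
Implicit Types (S I : R -> Prop).

Lemma gen_in S x : S x -> ideal_gen S x.
Proof.
move=> Sx; exists [:: (x, 1)]; split; first by move=> y; rewrite inE => /eqP ->.
by rewrite big_cons big_nil mul1r addr0.
Qed.

Lemma gen_0 S : ideal_gen S 0.
Proof. by exists [::]; split => //; rewrite big_nil. Qed.

Lemma gen_add S x y : ideal_gen S x -> ideal_gen S y -> ideal_gen S (x + y).
Proof.
move=> [s [Hs ->]] [t [Ht ->]]; exists (s ++ t); split; last by rewrite big_cat.
by move=> z; rewrite mem_cat => /orP [/Hs|/Ht].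
Qed.

Lemma gen_mull S r x : ideal_gen S x -> ideal_gen S (r * x).
Proof.
move=> [s [Hs ->]]; exists (map (fun z => (z.1, r * z.2)) s); split.
  by move=> z /mapP [w /Hs Hw ->].
by rewrite big_map mulr_sumr; apply: eq_bigr => z _; rewrite mulrA.
Qed.

Lemma gen_min S I f :
  (forall x, S x -> ideal_gen I x) -> ideal_gen S f -> ideal_gen I f.
Proof.
move=> SI [s [Hs ->]]; elim: s Hs => [|x s IH] Hs; first by rewrite big_nil; apply: gen_0.
rewrite big_cons; apply: gen_add; last by apply: IH => y hy; apply: Hs; rewrite inE hy orbT.
by apply/gen_mull/SI/Hs; rewrite inE eqxx.
Qed.

Lemma pow_add I n x y : ideal_pow I n x -> ideal_pow I n y -> ideal_pow I n (x + y).
Proof. by case: n => //= n; apply: gen_add. Qed.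

Lemma pow_mull I n r x : ideal_pow I n x -> ideal_pow I n (r * x).
Proof. by case: n => //= n; apply: gen_mull. Qed.

Lemma pow_sum I n (T : Type) (r : seq T) (P : pred T) (F : T -> R) :
  (forall i, P i -> ideal_pow I n (F i)) -> ideal_pow I n (\sum_(i <- r | P i) F i).
Proof.
move=> HF; elim/big_ind: _ => //; last exact: pow_add.
by case: n {HF} => //= n; apply: gen_0.
Qed.

Lemma pow_step I n a b : ideal_pow I n a -> I b -> ideal_pow I n.+1 (a * b).
Proof. by move=> Ha Ib /=; apply: gen_in; exists a, b. Qed.

Lemma pow1_gen S f : ideal_pow (ideal_gen S) 1 f -> ideal_gen S f.
Proof. by apply: gen_min => x [a [b [_ Sb ->]]]; apply: gen_mull. Qed.

Lemma pow_mulXn I c j i x :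
  I c -> ideal_pow I j x -> ideal_pow I (j + i) (c ^+ i * x).
Proof.
move=> Ic; elim: i => [|i IH] Hx; first by rewrite addn0 expr0 mul1r.
by rewrite addnS exprSr mulrAC; apply: pow_step => //; apply: IH.
Qed.
End Ideals.

Definition ff (k : nat) : {poly int} := \prod_(i < k) ('X - ((i : nat)%:Z)%:P).

Lemma ff_eval m k : (ff k).[m%:Z] = (m ^_ k)%:Z.
Proof.
elim: k => [|k IH]; first by rewrite /ff big_ord0 hornerC.
rewrite /ff big_ord_recr /= hornerM -/(ff k) IH hornerXsubC ffactnSr PoszM.
by case: (leqP k m) => hk; [rewrite subzn | rewrite ffact_small // mul0r].
Qed.

Lemma size_ff k : size (ff k) = k.+1.
Proof. by rewrite /ff size_prod_XsubC /index_enum unlock /= -enumT size_enum_ord. Qed.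

Lemma lead_ff k : (ff k)`_k = 1.
Proof.
have := monic_prod_XsubC (index_enum 'I_k) xpredT (fun i : 'I_k => (i : nat)%:Z).
by move/monicP; rewrite /lead_coef -/(ff k) size_ff.
Qed.

Lemma ff_expand N (f : {poly int}) : (size f <= N)%N ->
  exists d : nat -> int, f = \sum_(k < N) d k *: ff k.
Proof.
elim: N f => [|N IH] f hf.
  by exists (fun _ => 0); rewrite big_ord0; apply/eqP; rewrite -size_poly_eq0 -leqn0.
pose c := f`_N; pose g := f - c *: ff N.
have hg : (size g <= N)%N.
  apply/leq_sizeP => i hi; rewrite coefB coefZ.
  case: (ltngtP i N) => hiN; first by rewrite ltnNge hi in hiN.
    rewrite [f`_i]nth_default ?(leq_trans hf) //.
    by rewrite [(ff N)`_i]nth_default ?size_ff // mulr0 subr0.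
  by rewrite hiN lead_ff mulr1 subrr.
have [d Hd] := IH g hg.
exists (fun k => if k == N then c else d k).
rewrite big_ord_recr /= eqxx -[f](subrK (c *: ff N)) -/g Hd; congr (_ + _).
by apply: eq_bigr => i _; rewrite ltn_eqF.
Qed.

Lemma ff_dvd a k : (a <= k)%N -> exists g, ff k = ff a * g.
Proof.
move=> hak; rewrite -(subnKC hak).
by exists (\prod_(i < k - a) ('X - ((a + i)%N%:Z)%:P)); rewrite /ff big_split_ord.
Qed.

Lemma ff_block p m :
  ff (p * m.+1) = ff (p * m) * \prod_(i < p) ('X - ((p * m + i)%N%:Z)%:P).
Proof. by rewrite /ff mulnSr big_split_ord. Qed.

Lemma newton_coef_dvd (q : nat) N (d : nat -> int) :
  Ifix q (\sum_(k < N) d k *: ff k) ->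
  forall m, (m < N)%N -> (q%:Z %| (m`!)%:Z * d m)%Z.
Proof.
move=> Hf; elim/ltn_ind => m IH hm.
have := Hf m%:Z; rewrite horner_sum (bigD1 (Ordinal hm)) //=.
rewrite hornerZ ff_eval ffactnn mulrC rpredDr //; apply: rpred_sum => k /= hk.
rewrite hornerZ ff_eval; case: (ltngtP k m) => hkm.
- rewrite -bin_ffact PoszM mulrCA mulrC; apply: dvdz_mulr.
  by rewrite mulrC; apply: IH => //; apply: ltn_trans hm.
- by rewrite (ffact_small hkm) mulr0.
- by move: hk; rewrite -val_eqE /= hkm eqxx.
Qed.

(* Legendre's formula below p^2: v_p(k!) = k %/ p. *)
Lemma logn_fact_small p k : prime p -> (k < p * p)%N -> logn p k`! = (k %/ p)%N.
Proof.
move=> pp hk; rewrite logn_fact //.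
case: k hk => [|k] hk; first by rewrite big_geq ?div0n.
rewrite big_ltn // expn1 big_nat_cond big1 ?addn0 // => i /andP [/andP [hi _] _].
by apply: divn_small; apply: (leq_trans hk); rewrite mulnn leq_pexp2l ?prime_gt0.
Qed.

Lemma coef_valuation p n k (d : int) : prime p -> (n <= p)%N -> (k < p * n)%N ->
  ((p ^ n)%N%:Z %| (k`!)%:Z * d)%Z -> ((p ^ (n - k %/ p))%N%:Z %| d)%Z.
Proof.
move=> pp hnp hk; rewrite !dvdzE /= abszM absz_nat.
have [->|dnz] := eqVneq d 0; first by rewrite dvdn0.
have d0 : (0 < `|d|)%N by rewrite absz_gt0.
rewrite !pfactor_dvdn ?muln_gt0 ?fact_gt0 // lognM ?fact_gt0 //.
rewrite logn_fact_small // ?leq_subLR //.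
by apply: (leq_trans hk); rewrite leq_mul2l hnp orbT.
Qed.

Lemma dvd_prod_consecutive (p : nat) (b : int) : (0 < p)%N ->
  (p%:Z %| \prod_(i < p) (b - (i : nat)%:Z))%Z.
Proof.
move=> p0; have p0z : p%:Z != 0 by rewrite gt_eqF // ltz_nat.
have hlt : (`|(b %% p)%Z| < p)%N.
  by rewrite -ltz_nat gez0_abs ?modz_ge0 ?ltz_pmod ?ltz_nat.
rewrite (bigD1 (Ordinal hlt)) //=; apply: dvdz_mulr.
by rewrite gez0_abs ?modz_ge0 // {1}(divz_eq b p) addrK dvdz_mull.
Qed.

Lemma Ifix_gen q S f : (forall x, S x -> Ifix q x) -> ideal_gen S f -> Ifix q f.
Proof.
move=> HS [s [Hs ->]] a; rewrite horner_sum big_seq; apply: rpred_sum => x hx.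
by rewrite hornerM; apply/dvdz_mull/HS/Hs.
Qed.

Lemma Ifix_mul a b f g : Ifix a f -> Ifix b g -> Ifix (a * b) (f * g).
Proof. by move=> Hf Hg c; rewrite hornerM PoszM; apply: dvdz_mul. Qed.

Definition J (p : nat) : {poly int} -> Prop :=
  ideal_gen (fun g : {poly int} => g = (p%:Z)%:P \/ g = ff p).

Lemma J_Ifix p g : (0 < p)%N -> J p g -> Ifix p g.
Proof.
move=> p0; apply: Ifix_gen => x [->|->] a; first by rewrite hornerC dvdzz.
rewrite /ff horner_prod; under eq_bigr do rewrite hornerXsubC.
exact: dvd_prod_consecutive.
Qed.

Lemma Jpow_Ifix p n f : (0 < p)%N -> ideal_pow (J p) n f -> Ifix (p ^ n) f.
Proof.
move=> p0; elim: n f => [|n IH] f /=; first by move=> _ a; rewrite expn0 dvd1z.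
apply: Ifix_gen => x [a [b [Ha Hb ->]]].
by rewrite expnSr; apply: Ifix_mul; [apply: IH | apply: J_Ifix].
Qed.

Lemma Ifix_Jpow p n f : prime p -> (n <= p)%N ->
  (forall m, (m <= n)%N -> ideal_pow (J p) m (ff (p * m))) ->
  Ifix (p ^ n) f -> ideal_pow (J p) n f.
Proof.
move=> pp hnp HJ Hf; have p0 := prime_gt0 pp.
have [d Hd] := @ff_expand _ f (leqnn (size f)).
rewrite Hd in Hf *; apply: pow_sum => k _.
have hk := ltn_ord k; set j := (k %/ p)%N; rewrite -mul_polyC.
have [hnj | hjn] := leqP n j.
  have [g ->] : exists g, ff k = ff (p * n) * g.
    by apply: ff_dvd; rewrite mulnC -leq_divRL.
  by rewrite mulrA mulrAC; apply: pow_mull; apply: HJ.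
have [g ->] : exists g, ff k = ff (p * j) * g.
  by apply: ff_dvd; rewrite mulnC leq_divM.
have hkpn : (k < p * n)%N by rewrite mulnC -ltn_divLR.
have /dvdzP [c ->] := coef_valuation _ _ _ _ pp hnp hkpn (newton_coef_dvd _ _ _ Hf _ hk).
rewrite -/j polyCM -natz natrX rmorphXn /= natz.
have -> : c%:P * (p%:Z)%:P ^+ (n - j) * (ff (p * j) * g)
        = c%:P * g * ((p%:Z)%:P ^+ (n - j) * ff (p * j)) by ring.
apply: pow_mull; rewrite -{1}(subnKC (ltnW hjn)).
by apply: pow_mulXn; [apply: gen_in; left | apply: HJ; apply: ltnW].
Qed.

Lemma block_in_J p m : prime p -> J p (\prod_(i < p) ('X - ((p * m + i)%N%:Z)%:P)).
Proof.
move=> pp; apply: pow1_gen; apply: (Ifix_Jpow _ 1 _ pp (prime_gt0 pp)).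
  case=> [|[|//]] _ //=; rewrite muln1 -[ff p]mul1r.
  by apply: gen_in; exists 1, (ff p); split => //; apply: gen_in; right.
move=> a; rewrite expn1 horner_prod.
under eq_bigr do rewrite hornerXsubC PoszD opprD addrA.
exact/dvd_prod_consecutive/prime_gt0.
Qed.

Lemma ff_in_Jpow p m : prime p -> ideal_pow (J p) m (ff (p * m)).
Proof.
move=> pp; elim: m => [|m IH] //=.
by rewrite ff_block; apply: pow_step => //; apply: block_in_J.
Qed.

Theorem mainTheorem13 (p n : nat) (hp : prime p) (hn : (0 < n)%N) (hpn : (n <= p)%N)
  (f : {poly int}) :
  Ifix (p ^ n)%N f <->
  ideal_pow (ideal_gen (fun g : {poly int} =>
                g = (p%:Z)%:P \/ g = \prod_(i < p) ('X - ((i : nat)%:Z)%:P))) n f.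
Proof.
split; last exact/Jpow_Ifix/prime_gt0.
by apply: Ifix_Jpow => // m _; apply: ff_in_Jpow.
Qed.
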